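(* (1) If $\iota$ is an involution of odd type with patching element $\gamma$, then $\mathcal H\cap\Omega^+_{\mathbb K_\gamma}\neq\emptyset$. (2) If $\iota$ is an involution of even type with patching element $\gamma$, then $\mathcal H\cap\Omega^+_{\mathbb K_\gamma}=\emptyset$.
   Context: $\Lambda=\mathbb U(2)\oplus\mathbb U\oplus\mathbb E_8(2)$; $\Omega_\Lambda^+$ a fixed component of $\{[\omega]\in\mathbf P(\Lambda\otimes\mathbb C):\omega^2=0,\langle\omega,\bar\omega\rangle>0\}$; for $d\in\Lambda\otimes\mathbb R$, $H_d=\{\omega\in\Omega_\Lambda^+:\langle\omega,d\rangle=0\}$; $\mathcal H=\bigcup_{d\in\Lambda,d^2=-2}H_d$. Setting: $\iota$ is a fixed-point-free involution of $K_{\tau,\tau'}=\mathrm{Km}(E_\tau\times E_{\tau'})$ with $\mathbf K\subset H^2(K_{\tau,\tau'},\mathbb Z)_-$ ($\mathbf K\cong\mathbb U(2)\oplus\mathbb U(2)$ the image of $H^1(E_\tau,\mathbb Z)\otimes H^1(E_{\tau'},\mathbb Z)$), $\alpha$ a marking with $\alpha(H^2_-)=\Lambda$ and period in $\Omega_\Lambda^+$, $\mathbb K_\gamma=\alpha(\mathbf K)$, $\mathbb E_\gamma$ the orthogonal complement of $\mathbb K_\gamma$ in $\Lambda$ ($\cong\mathbb E_8(2)$), and $\Omega^+_{\mathbb K_\gamma}=\{[\omega]\in\Omega^+_\Lambda:\omega\in\mathbb K_\gamma\otimes\mathbb C\}$. Writing $\Lambda=\mathbb Z(d_1+d_2)+\mathbb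 K_\gamma\oplus\mathbb E_\gamma$ with $d_1\in\mathbb K_\gamma^\vee\setminus\mathbb K_\gamma$, $d_2\in\mathbb E_\gamma^\vee\setminus\mathbb E_\gamma$, the patching element is $\gamma=\bar d_1\in A_{\mathbf K}$, and $\iota$ is of odd (resp. even) type if $q_{\mathbf K}(\gamma)=1$ (resp. $0$) in $\mathbb Z/2$. *)

From HB Require Import structures.
From mathcomp Require Import all_boot all_order all_algebra.
From mathcomp Require Import complex.
Set Implicit Arguments. Unset Strict Implicit. Unset Printing Implicit Defensive.
Import Order.TTheory GRing.Theory Num.Theory.
Local Open Scope ring_scope.

(* Dynkin diagram of E8 (Bourbaki numbering, 0-indexed):
   0-2-3-4-5-6-7 is a chain and 1 is attached to 3. *)
Definition e8edge (i j : nat) : bool :=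
  let e a b := ((i == a) && (j == b)) || ((i == b) && (j == a)) in
  [|| e 0 2, e 2 3, e 3 4, e 4 5, e 5 6, e 6 7 | e 1 3]%N.

(* entries of the negative definite E8 lattice scaled by s : E8(s) *)
Definition e8_entry (s : int) (i j : nat) : int :=
  if i == j then (- 2 * s)%R else if e8edge i j then s else 0.

Definition E8_2 : 'M[int]_8 := \matrix_(i < 8, j < 8) e8_entry 2 i j.

Definition U2U2 : 'M[int]_4 :=
  \matrix_(i < 4, j < 4)
    (let i' := nat_of_ord i in let j' := nat_of_ord j in
     if [|| (i' == 0) && (j' == 1), (i' == 1) && (j' == 0),
        (i' == 2) && (j' == 3) | (i' == 3) && (j' == 2)]%N
     then 2%:Z else 0%:Z).

(* Lambda = U(2) + U + E8(2) on Z^12: coordinates 0,1 : U(2); 2,3 : U;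
   4..11 : E8(2). *)
Definition lam_entry (i j : nat) : int :=
  if ((i == 0%N) && (j == 1%N)) || ((i == 1%N) && (j == 0%N)) then 2
  else if ((i == 2%N) && (j == 3%N)) || ((i == 3%N) && (j == 2%N)) then 1
  else if (4 <= i)%N && (4 <= j)%N then e8_entry 2 (i - 4) (j - 4)
  else 0.

Definition GLam : 'M[int]_12 := \matrix_(i < 12, j < 12) lam_entry i j.

Definition bil {F : comNzRingType} (u v : 'rV[F]_12) : F :=
  (u *m map_mx intr GLam *m v^T) 0 0.

Definition isZ (x : rat) : Prop := exists z : int, x = z%:~R.

(* q (in Q/2Z) equals b mod 2 *)
Definition qmod2 (x : rat) (b : int) : Prop := exists k : int, x = (2 * k + b)%:~R.

Definition ratv {n : nat} (v : 'rV[int]_n) : 'rV[rat]_n := map_mx intr v.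

(* A positive definite real 2-plane spanned by p1 p2; its orientation is used
   to single out one of the two connected components of the period domain. *)
Definition pos_plane {R : rcfType} (p1 p2 : 'rV[R]_12) : Prop :=
  [/\ 0 < bil p1 p1 & 0 < bil p1 p1 * bil p2 p2 - bil p1 p2 ^+ 2].

Definition reV {R : rcfType} (w : 'rV[R[i]]_12) : 'rV[R]_12 := map_mx (fun z : R[i] => complex.Re z) w.
Definition imV {R : rcfType} (w : 'rV[R[i]]_12) : 'rV[R]_12 := map_mx (fun z : R[i] => complex.Im z) w.
Definition conjV {R : rcfType} (w : 'rV[R[i]]_12) : 'rV[R[i]]_12 :=
  map_mx (@conjc R) w.

(* Omega_Lambda^+ : the representative w of [w] satisfies w^2 = 0, <w, conj w> > 0,
   and the oriented positive plane (Re w, Im w) has the same orientation as (p1,p2)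
   (sign of the determinant of pairings).  This condition is invariant under
   w |-> c w, c in C^*, and selects one of the two connected components. *)
Definition OmegaPlus {R : rcfType} (p1 p2 : 'rV[R]_12) (w : 'rV[R[i]]_12) : Prop :=
  [/\ bil w w = 0, 0 < bil w (conjV w) &
  0 < bil (reV w) p1 * bil (imV w) p2 - bil (reV w) p2 * bil (imV w) p1].

Definition onH {R : rcfType} (d : 'rV[int]_12) (w : 'rV[R[i]]_12) : Prop :=
  bil w (map_mx intr d) = 0.

Definition inHcal {R : rcfType} (w : 'rV[R[i]]_12) : Prop :=
  exists d : 'rV[int]_12, [/\ bil d d = - 2 & onH d w].

(* w in K (x) C, where the rows of B form a Z-basis of K *)
Definition inKC {R : rcfType} (B : 'M[int]_(4, 12)) (w : 'rV[R[i]]_12) : Prop :=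
  exists c : 'rV[R[i]]_4, w = c *m map_mx intr B.

Definition K_basis (B : 'M[int]_(4, 12)) : Prop := B *m GLam *m B^T = U2U2.

Definition E_basis_perp (B : 'M[int]_(4, 12)) (C : 'M[int]_(8, 12)) : Prop :=
  [/\ C *m GLam *m C^T = E8_2,
      (forall (i : 'I_4) (j : 'I_8), bil (row i B) (row j C) = 0) &
      (forall v : 'rV[int]_12, (forall i : 'I_4, bil v (row i B) = 0) ->
         exists b : 'rV[int]_8, v = b *m C)].

(* d lies in M^v \ M, where the rows of M (n x 12) are a Z-basis of M *)
Definition in_dual_not_in {n : nat} (M : 'M[int]_(n, 12)) (d : 'rV[rat]_12) : Prop :=
  exists t : 'rV[rat]_n,
    [/\ d = t *m map_mx intr M,
        (forall i : 'I_n, isZ (bil d (ratv (row i M)))) &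
        ~ (forall i : 'I_n, isZ (t 0 i))].

Definition glue_decomp (B : 'M[int]_(4, 12)) (C : 'M[int]_(8, 12))
    (d1 d2 : 'rV[rat]_12) : Prop :=
  [/\ (forall v : 'rV[int]_12, exists (n : int) (a : 'rV[int]_4) (b : 'rV[int]_8),
        ratv v = n%:~R *: (d1 + d2) + ratv a *m map_mx intr B
                 + ratv b *m map_mx intr C) &
      (forall (n : int) (a : 'rV[int]_4) (b : 'rV[int]_8),
        exists v : 'rV[int]_12,
        ratv v = n%:~R *: (d1 + d2) + ratv a *m map_mx intr B
                 + ratv b *m map_mx intr C)].

(* B : a Z-basis of K_gamma = U(2)+U(2), C : a Z-basis of E_gamma = K_gamma^perp
   (= E8(2)), d1 in K^v \ K, d2 in E^v \ E, Lambda = Z(d1+d2) + K (+) E.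
   The patching element is gamma = class of d1 in A_K, and q_K(gamma) = d1^2 mod 2Z. *)
Definition patching_data (B : 'M[int]_(4, 12)) (C : 'M[int]_(8, 12))
    (d1 d2 : 'rV[rat]_12) : Prop :=
  [/\ K_basis B, E_basis_perp B C, in_dual_not_in B d1, in_dual_not_in C d2 &
      glue_decomp B C d1 d2].

From HB Require Import structures.
From mathcomp Require Import all_boot all_order all_algebra.
From mathcomp Require Import complex.
From mathcomp Require Import ring lra zify.
Set Implicit Arguments. Unset Strict Implicit. Unset Printing Implicit Defensive.
Import Order.TTheory GRing.Theory Num.Theory.
Local Open Scope ring_scope.

(* Write Lambda (x) Q = (K (+) E) (x) Q with K = U(2) + U(2) and E = E8(2), and let
   s = 2 d1 in K, r = 2 d2 in E; both are nonzero modulo 2.  Doubling a vector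
   v = n (d1 + d2) + a + b of Lambda gives 2 v = sigma + rho with sigma = n s + 2 a in K
   and rho = n r + 2 b in E, and v^2 = q(sigma) - qE8(rho) in the coordinates of U + U
   and E8.  A period in K (x) C is w = X + iY for an oriented positive plane <X, Y> of
   K (x) R, and v is orthogonal to w exactly when sigma is orthogonal to X and Y.
   Odd type: q(s) is odd, hence so is qE8(r) because Lambda is even.  Every class of
   odd norm of (U + U) / 2 (U + U), resp. E8 / 2 E8, contains a vector of norm -1,
   resp. a root, so sigma and rho can be chosen with v^2 = -1 - 1 = -2; a positive
   plane of K orthogonal to sigma then gives the period X + iY or X - iY, whichever
   has the orientation of Omega^+.
   Even type: for a root v the coefficient n is odd (otherwise 4 divides v^2 = -2), so
   rho = r and sigma = s modulo 2; thus rho <> 0, and q(sigma) = qE8(rho) - 2 >= -1 is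
   even like q(s), hence >= 0.  As K (x) R has signature (2, 2), the orthogonal
   complement of a positive plane is negative definite, so sigma = 0, contradicting
   sigma = s modulo 2. *)

(* [rcoord x k] is the k-th coordinate of [x]; out of range it is coordinate 0. *)
Definition rcoord {T : Type} {n : nat} (x : 'rV[T]_n.+1) (k : nat) : T := x 0 (inord k).

Lemma rcoordE {T : Type} n (x : 'rV[T]_n.+1) (i : 'I_n.+1) : rcoord x i = x 0 i.
Proof. by rewrite /rcoord inord_val. Qed.

Lemma rcoord_eq0 (V : nmodType) n (x : 'rV[V]_n.+1) :
  (forall k, (k < n.+1)%N -> rcoord x k = 0) -> x = 0.
Proof. by move=> x0; apply/rowP => j; rewrite -rcoordE x0 ?mxE. Qed.

Lemma rcoord_row (T : Type) n (f : nat -> T) k :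
  (k < n.+1)%N -> rcoord (\row_(j < n.+1) f j) k = f k.
Proof. by move=> k_lt; rewrite /rcoord mxE inordK. Qed.

Lemma rcoord_map (aT rT : Type) (f : aT -> rT) n (x : 'rV[aT]_n.+1) k :
  rcoord (map_mx f x) k = f (rcoord x k).
Proof. by rewrite /rcoord mxE. Qed.

Lemma rcoord_shift n (s a : 'rV[int]_n.+1) k :
  rcoord (s + 2 *: a) k = rcoord s k + 2 * rcoord a k.
Proof. by rewrite /rcoord !mxE. Qed.

Lemma sum_inord (V : nmodType) n (f : 'I_n.+1 -> V) :
  \sum_i f i = \sum_(0 <= k < n.+1) f (inord k).
Proof. by rewrite big_mkord; apply: eq_bigr => i _; rewrite inord_val. Qed.

Definition bform {F : pzRingType} m n (G : 'M[F]_(m, n)) (u : 'rV[F]_m) (v : 'rV[F]_n) : F :=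
  (u *m G *m v^T) 0 0.

Section FormAlgebra.
Variables (F : comNzRingType) (m n : nat) (G : 'M[F]_(m, n)).

Lemma bformDl u1 u2 v : bform G (u1 + u2) v = bform G u1 v + bform G u2 v.
Proof. by rewrite /bform !mulmxDl mxE. Qed.

Lemma bformDr u v1 v2 : bform G u (v1 + v2) = bform G u v1 + bform G u v2.
Proof. by rewrite /bform linearD mulmxDr mxE. Qed.

Lemma bformZl a u v : bform G (a *: u) v = a * bform G u v.
Proof. by rewrite /bform -!scalemxAl mxE. Qed.

Lemma bformZr a u v : bform G u (a *: v) = a * bform G u v.
Proof. by rewrite /bform linearZ -scalemxAr mxE. Qed.

Lemma bformNl u v : bform G (- u) v = - bform G u v.
Proof. by rewrite -scaleN1r bformZl mulN1r. Qed.

Lemma bformNr u v : bform G u (- v) = - bform G u v.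
Proof. by rewrite -scaleN1r bformZr mulN1r. Qed.

Lemma bform0r u : bform G u 0 = 0.
Proof. by rewrite -(scale0r 0) bformZr mul0r. Qed.

Lemma bform_mulmx p q (M : 'M[F]_(p, m)) (N : 'M[F]_(q, n)) x y :
  bform G (x *m M) (y *m N) = bform (M *m G *m N^T) x y.
Proof. by rewrite /bform trmx_mul !mulmxA. Qed.

End FormAlgebra.

Lemma bformC (F : comNzRingType) n (G : 'M[F]_n) :
  G^T = G -> forall u v, bform G u v = bform G v u.
Proof.
move=> G_sym u v; rewrite /bform.
have -> : (u *m G *m v^T) 0 0 = ((u *m G *m v^T)^T) 0 0 by rewrite [RHS]mxE.
by rewrite !trmx_mul trmxK G_sym mulmxA.
Qed.

Lemma bform_map (F1 F2 : comNzRingType) (f : {rmorphism F1 -> F2}) m n (G : 'M[F1]_(m, n)) u v :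
  bform (map_mx f G) (map_mx f u) (map_mx f v) = f (bform G u v).
Proof. by rewrite /bform map_trmx -!map_mxM mxE. Qed.

Lemma bform_coord (F : comNzRingType) m n (G : 'M[F]_(m.+1, n.+1)) x y :
  bform G x y = \sum_(0 <= i < m.+1) \sum_(0 <= j < n.+1)
                 rcoord x i * G (inord i) (inord j) * rcoord y j.
Proof.
rewrite /bform !mxE; under eq_bigr do rewrite !mxE mulr_suml.
rewrite exchange_big /= sum_inord; apply: eq_big_nat => i _.
by rewrite sum_inord; apply: eq_big_nat => j _.
Qed.

Lemma bilE (F : comNzRingType) (u v : 'rV[F]_12) : bil u v = bform (map_mx intr GLam) u v.
Proof. by []. Qed.

Lemma e8edge_sym a b : e8edge a b = e8edge b a.
Proof. by case: a => [|[|[|[|[|[|[|[|a]]]]]]]]; case: b => [|[|[|[|[|[|[|[|b]]]]]]]]. Qed.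

Lemma lam_entry_sym i j : lam_entry i j = lam_entry j i.
Proof.
have pairC a b : ((i == a) && (j == b)) || ((i == b) && (j == a))
               = ((j == a) && (i == b)) || ((j == b) && (i == a)).
  by rewrite orbC !(andbC (i == _)).
rewrite /lam_entry /e8_entry (e8edge_sym (i - 4)) (eq_sym (i - 4)%N (j - 4)%N).
by rewrite (andbC (4 <= i)%N) (pairC 0%N 1%N) (pairC 2%N 3%N).
Qed.

Lemma GLam_sym (F : pzRingType) : (map_mx intr GLam : 'M[F]_12)^T = map_mx intr GLam.
Proof. by apply/matrixP => i j; rewrite !mxE lam_entry_sym. Qed.

Lemma bilC (F : comNzRingType) (u v : 'rV[F]_12) : bil u v = bil v u.
Proof. exact/bformC/GLam_sym. Qed.

Section BilAlgebra.
Variable F : comNzRingType.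
Implicit Types u v : 'rV[F]_12.

Lemma bilDl u1 u2 v : bil (u1 + u2) v = bil u1 v + bil u2 v. Proof. exact: bformDl. Qed.
Lemma bilDr u v1 v2 : bil u (v1 + v2) = bil u v1 + bil u v2. Proof. exact: bformDr. Qed.
Lemma bilZl a u v : bil (a *: u) v = a * bil u v. Proof. exact: bformZl. Qed.
Lemma bilZr a u v : bil u (a *: v) = a * bil u v. Proof. exact: bformZr. Qed.
Lemma bilNl u v : bil (- u) v = - bil u v. Proof. exact: bformNl. Qed.
Lemma bilNr u v : bil u (- v) = - bil u v. Proof. exact: bformNr. Qed.
Lemma bil0r u : bil u 0 = 0. Proof. exact: bform0r. Qed.

End BilAlgebra.

Lemma bil_map (F1 F2 : comNzRingType) (f : {rmorphism F1 -> F2}) (u v : 'rV[F1]_12) :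
  bil (map_mx f u) (map_mx f v) = f (bil u v).
Proof.
rewrite !bilE -bform_map -map_mx_comp; congr bform.
by apply: eq_map_mx => z; rewrite /= rmorph_int.
Qed.

Lemma bil_scale2 (F : comNzRingType) (u : 'rV[F]_12) : bil (2 *: u) (2 *: u) = 4 * bil u u.
Proof. by rewrite bilZl bilZr mulrA -natrM. Qed.

(** * The quadratic forms of U + U and E8 *)

Definition qU2 {F : pzRingType} (x : nat -> F) : F := x 0%N * x 1%N + x 2%N * x 3%N.

Definition bU2 {F : pzRingType} (x y : nat -> F) : F :=
  x 0%N * y 1%N + x 1%N * y 0%N + x 2%N * y 3%N + x 3%N * y 2%N.

Lemma bU2_diag (F : comNzRingType) (x : nat -> F) : bU2 x x = 2 * qU2 x.
Proof. by rewrite /bU2 /qU2; ring. Qed.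

Lemma qU2_ext (F : pzRingType) (x y : nat -> F) :
  (forall k, (k < 4)%N -> x k = y k) -> qU2 x = qU2 y.
Proof. by move=> xy; rewrite /qU2 !xy. Qed.

Lemma bU2_ext (F : pzRingType) (x x' y y' : nat -> F) :
  (forall k, (k < 4)%N -> x k = x' k) -> (forall k, (k < 4)%N -> y k = y' k) ->
  bU2 x y = bU2 x' y'.
Proof. by move=> xx' yy'; rewrite /bU2 !xx' ?yy'. Qed.

Lemma qU2_shift (t m : nat -> int) : (2 %| qU2 (fun k => t k + 2 * m k) - qU2 t)%Z.
Proof.
by apply/dvdzP; exists (qU2 (fun k => t k + m k) - qU2 t + qU2 m); rewrite /qU2; ring.
Qed.

Definition qE8 {F : pzRingType} (x : nat -> F) : F :=
  x 0%N * x 0%N + x 1%N * x 1%N + x 2%N * x 2%N + x 3%N * x 3%N + x 4%N * x 4%N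
  + x 5%N * x 5%N + x 6%N * x 6%N + x 7%N * x 7%N
  - (x 0%N * x 2%N + x 2%N * x 3%N + x 3%N * x 4%N + x 4%N * x 5%N + x 5%N * x 6%N
     + x 6%N * x 7%N + x 1%N * x 3%N).

Lemma qE8_ext (F : pzRingType) (x y : nat -> F) :
  (forall k, (k < 8)%N -> x k = y k) -> qE8 x = qE8 y.
Proof. by move=> xy; rewrite /qE8 !xy. Qed.

Lemma qE8_shift (t m : nat -> int) : (2 %| qE8 (fun k => t k + 2 * m k) - qE8 t)%Z.
Proof.
by apply/dvdzP; exists (qE8 (fun k => t k + m k) - qE8 t + qE8 m); rewrite /qE8; ring.
Qed.

Lemma qE8_sos (F : comNzRingType) (x : nat -> F) :
  120 * qE8 x = 30 * (2 * x 0%N - x 2%N) ^+ 2 + 30 * (2 * x 1%N - x 3%N) ^+ 2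
   + 10 * (3 * x 2%N - 2 * x 3%N) ^+ 2 + 2 * (5 * x 3%N - 6 * x 4%N) ^+ 2
   + 3 * (4 * x 4%N - 5 * x 5%N) ^+ 2 + 5 * (3 * x 5%N - 4 * x 6%N) ^+ 2
   + 10 * (2 * x 6%N - 3 * x 7%N) ^+ 2 + 30 * x 7%N ^+ 2.
Proof. by rewrite /qE8; ring. Qed.

Lemma qE8_ge0 (R : realDomainType) (x : nat -> R) : 0 <= qE8 x.
Proof.
rewrite -(pmulr_rge0 _ (ltr0n R 120)) qE8_sos.
by repeat apply: addr_ge0; apply: mulr_ge0; rewrite ?sqr_ge0.
Qed.

Lemma qE8_eq0 (R : realDomainType) (x : nat -> R) :
  qE8 x <= 0 -> forall k, (k < 8)%N -> x k = 0.
Proof.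
move=> q_le0; have : 120 * qE8 x == 0.
  by rewrite eq_le pmulr_rle0 // q_le0 mulr_ge0 ?qE8_ge0.
rewrite qE8_sos !paddr_eq0; try by repeat apply: addr_ge0; apply: mulr_ge0; rewrite ?sqr_ge0.
rewrite !mulf_eq0 !pnatr_eq0 !orbb /=.
do 7!case/andP; move=> /eqP e0 /eqP e1 /eqP e2 /eqP e3 /eqP e4 /eqP e5 /eqP e6 /eqP e7 k.
by do 8?[case: k => [_|k]; first lra].
Qed.

Lemma qE8_gt0 (R : realDomainType) (x : 'rV[R]_8) : x != 0 -> 0 < qE8 (rcoord x).
Proof.
apply: contraNT; rewrite -leNgt => /qE8_eq0 x0.
by apply/eqP/rcoord_eq0 => k /x0.
Qed.

Definition E8_2_coef {F : pzRingType} (i j : nat) : F :=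
  if i == j then -4 else if e8edge i j then 2 else 0.

Definition GLam_coef {F : pzRingType} (i j : nat) : F :=
  if ((i == 0%N) && (j == 1%N)) || ((i == 1%N) && (j == 0%N)) then 2
  else if ((i == 2%N) && (j == 3%N)) || ((i == 3%N) && (j == 2%N)) then 1
  else if (4 <= i)%N && (4 <= j)%N then E8_2_coef (i - 4) (j - 4)
  else 0.

Lemma E8_2_coefE (F : pzRingType) i j : (e8_entry 2 i j)%:~R = E8_2_coef i j :> F.
Proof.
rewrite /e8_entry /E8_2_coef; case: ifP => _; last by case: ifP.
by rewrite intrM mulrNz mulNr -[2%:~R]/(2%:R : F) -natrM.
Qed.

Lemma GLam_coefE (F : pzRingType) i j : (lam_entry i j)%:~R = GLam_coef i j :> F.
Proof.
rewrite /lam_entry /GLam_coef; do 2!case: ifP => // _.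
by case: ifP => _ //; exact: E8_2_coefE.
Qed.

Lemma bform_U2U2 (F : comNzRingType) (x y : 'rV[F]_4) :
  bform (map_mx intr U2U2) x y = 2 * bU2 (rcoord x) (rcoord y).
Proof.
rewrite bform_coord !big_nat_recr //= !big_nil !mxE !inordK //=.
by rewrite /bU2; ring.
Qed.

Lemma U2U2_sym (F : pzRingType) : (map_mx intr U2U2 : 'M[F]_4)^T = map_mx intr U2U2.
Proof. by apply/matrixP => -[[|[|[|[|?]]]] ?] [[|[|[|[|?]]]] ?]; rewrite !mxE. Qed.

Lemma bform_E8_2 (F : comNzRingType) (x : 'rV[F]_8) :
  bform (map_mx intr E8_2) x x = - 4 * qE8 (rcoord x).
Proof.
rewrite bform_coord !big_nat_recr //= !big_nil !mxE !inordK // !E8_2_coefE.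
by rewrite /E8_2_coef /qE8 /=; ring.
Qed.

Lemma bil_coord (F : comNzRingType) (u : 'rV[F]_12) :
  bil u u = 4 * (rcoord u 0 * rcoord u 1) + 2 * (rcoord u 2 * rcoord u 3)
            - 4 * qE8 (fun k => rcoord u (k + 4)).
Proof.
rewrite bilE bform_coord.
under eq_big_nat => i /andP[_ hi] do under eq_big_nat => j /andP[_ hj] do
  rewrite !mxE !inordK // GLam_coefE.
by rewrite !big_nat_recr //= !big_nil /GLam_coef /E8_2_coef /qE8 /=; ring.
Qed.

Lemma bil_even (v : 'rV[int]_12) : (2 %| bil v v)%Z.
Proof.
apply/dvdzP; exists (2 * (rcoord v 0 * rcoord v 1) + rcoord v 2 * rcoord v 3
                     - 2 * qE8 (fun k => rcoord v (k + 4))).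
by rewrite bil_coord; ring.
Qed.

(** * Forms of positive index two *)

Lemma dependent3 (F : fieldType) (w1 w2 w3 : 'rV[F]_2) :
  exists a b c : F, [|| a != 0, b != 0 | c != 0] /\ a *: w1 + b *: w2 + c *: w3 = 0.
Proof.
pose M : 'M[F]_(3, 2) := \matrix_(i < 3) nth 0 [:: w1; w2; w3] i.
have : ~~ row_free M by rewrite /row_free neq_ltn (leq_ltn_trans (rank_leq_col M)).
rewrite -kermx_eq0 => /rowV0Pn[c /sub_kermxP cM0 c_neq0].
exists (rcoord c 0), (rcoord c 1), (rcoord c 2); split.
  apply: contraNT c_neq0; rewrite !negb_or !negbK => /and3P[/eqP c0 /eqP c1 /eqP c2].
  apply/eqP/rowP => j; rewrite mxE -(rcoordE c j).
  by case: j => -[|[|[|//]]] j_lt /=.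
by rewrite -cM0 mulmx_sum_row sum_inord !big_nat_recr //= big_nil add0r !rowK !inordK.
Qed.

(* [z *m hyp_slice n = 0] cuts out the orthogonal complement of a positive definite
   plane, both in Lambda and in U(2) + U(2). *)
Definition hyp_slice {F : pzRingType} n : 'M[F]_(n.+1, 2) :=
  row_mx (delta_mx (inord 0) 0 + delta_mx (inord 1) 0 : 'cV_n.+1)
         (delta_mx (inord 2) 0 + delta_mx (inord 3) 0 : 'cV_n.+1).

Lemma hyp_slice_eq0 (F : pzRingType) n (z : 'rV[F]_n.+1) : z *m hyp_slice n = 0 ->
  rcoord z 0 + rcoord z 1 = 0 /\ rcoord z 2 + rcoord z 3 = 0.
Proof.
rewrite /hyp_slice (@mul_mx_row _ _ _ 1 1) !mulmxDr -!colE => /eqP.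
rewrite (@row_mx_eq0 _ 1 1).
by case/andP => /eqP/matrixP/(_ 0 0) + /eqP/matrixP/(_ 0 0); rewrite !mxE.
Qed.

Lemma quad2_ge0 (R : realFieldType) (A B C a b : R) :
  0 < A -> 0 < A * C - B ^+ 2 -> 0 <= a ^+ 2 * A + 2 * a * b * B + b ^+ 2 * C.
Proof.
move=> A_gt0 D_gt0; rewrite -(pmulr_rge0 _ A_gt0).
have -> : A * (a ^+ 2 * A + 2 * a * b * B + b ^+ 2 * C)
          = (a * A + b * B) ^+ 2 + b ^+ 2 * (A * C - B ^+ 2) by ring.
by rewrite addr_ge0 ?sqr_ge0 // mulr_ge0 ?sqr_ge0 // ltW.
Qed.

(* Three vectors always have a nontrivial combination in the kernel of [S], so a form
   that is negative definite there admits no positive definite 3-space. *)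
Section PositiveIndexTwo.
Variables (R : realFieldType) (n : nat) (G : 'M[R]_n) (S : 'M[R]_(n, 2)).
Hypothesis G_sym : G^T = G.
Hypothesis negdef_on_kerS : forall z, z *m S = 0 -> 0 <= bform G z z -> z = 0.

Lemma bform_perp_posplane (p1 p2 v : 'rV[R]_n) :
  0 < bform G p1 p1 -> 0 < bform G p1 p1 * bform G p2 p2 - bform G p1 p2 ^+ 2 ->
  bform G p1 v = 0 -> bform G p2 v = 0 -> 0 <= bform G v v -> v = 0.
Proof.
move=> A_gt0 D_gt0 p1v p2v vv_ge0; have GC := bformC G_sym.
have [a [b [c [abc_neq0 abcS]]]] := dependent3 (p1 *m S) (p2 *m S) (v *m S).
set z := a *: p1 + b *: p2 + c *: v.
have zz : bform G z z = a ^+ 2 * bform G p1 p1 + 2 * a * b * bform G p1 p2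
                        + b ^+ 2 * bform G p2 p2 + c ^+ 2 * bform G v v.
  rewrite !(bformDl, bformDr, bformZl, bformZr) (GC v p1) (GC v p2) (GC p2 p1) p1v p2v.
  ring.
have z0 : z = 0.
  apply: negdef_on_kerS; first by rewrite !mulmxDl -!scalemxAl.
  by rewrite zz; apply: addr_ge0; [exact: quad2_ge0 | exact: mulr_ge0 (sqr_ge0 c) vv_ge0].
have p1z : a * bform G p1 p1 + b * bform G p1 p2 = 0.
  by rewrite -(bform0r G p1) -z0 !(bformDr, bformZr) p1v mulr0 addr0.
have p2z : a * bform G p1 p2 + b * bform G p2 p2 = 0.
  by rewrite -(bform0r G p2) -z0 !(bformDr, bformZr) p2v (GC p2 p1) mulr0 addr0.
have [a0 b0] : a = 0 /\ b = 0.
  have D_neq0 := lt0r_neq0 D_gt0.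
  have aD : a * (bform G p1 p1 * bform G p2 p2 - bform G p1 p2 ^+ 2)
    = bform G p2 p2 * (a * bform G p1 p1 + b * bform G p1 p2)
      - bform G p1 p2 * (a * bform G p1 p2 + b * bform G p2 p2) by ring.
  have bD : b * (bform G p1 p1 * bform G p2 p2 - bform G p1 p2 ^+ 2)
    = bform G p1 p1 * (a * bform G p1 p2 + b * bform G p2 p2)
      - bform G p1 p2 * (a * bform G p1 p1 + b * bform G p1 p2) by ring.
  rewrite p1z p2z !mulr0 subrr in aD bD.
  by split; apply/eqP; rewrite -(mulIr_eq0 _ (mulIf D_neq0)) ?aD ?bD.
move: abc_neq0 z0; rewrite /z a0 b0 eqxx !scale0r !add0r /= => c_neq0 /eqP.
by rewrite scaler_eq0 (negbTE c_neq0) => /eqP.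
Qed.
End PositiveIndexTwo.

Lemma sqr_le0 (R : realDomainType) (x : R) : (x ^+ 2 <= 0) = (x == 0).
Proof. by rewrite -sqrf_eq0 eq_le sqr_ge0 andbT. Qed.

Lemma bil_negdef_slice (R : realFieldType) (z : 'rV[R]_12) :
  z *m hyp_slice 11 = 0 -> 0 <= bil z z -> z = 0.
Proof.
move=> /hyp_slice_eq0[z01 z23]; rewrite bil_coord.
have z1E : rcoord z 1 = - rcoord z 0 by lra.
have z3E : rcoord z 3 = - rcoord z 2 by lra.
rewrite z1E z3E !mulrN -!expr2 => zz_ge0.
have [] :
    [/\ rcoord z 0 ^+ 2 <= 0, rcoord z 2 ^+ 2 <= 0 & qE8 (fun k => rcoord z (k + 4)) <= 0].
  move: zz_ge0 (sqr_ge0 (rcoord z 0)) (sqr_ge0 (rcoord z 2)).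
  move: (qE8_ge0 (fun k => rcoord z (k + 4))).
  by move: (qE8 _) (rcoord z 0 ^+ 2) (rcoord z 2 ^+ 2) => q a b; split; lra.
rewrite !sqr_le0 => /eqP z0 /eqP z2 /qE8_eq0 zE8.
apply: rcoord_eq0 => -[|[|[|[|k]]]] k_lt; rewrite ?z1E ?z3E ?z0 ?z2 ?oppr0 //.
by rewrite -[k.+4]addn4 zE8.
Qed.

Lemma U2U2_negdef_slice (R : realFieldType) (z : 'rV[R]_4) :
  z *m hyp_slice 3 = 0 -> 0 <= bform (map_mx intr U2U2) z z -> z = 0.
Proof.
move=> /hyp_slice_eq0[z01 z23]; rewrite bform_U2U2 /bU2.
have z1E : rcoord z 1 = - rcoord z 0 by lra.
have z3E : rcoord z 3 = - rcoord z 2 by lra.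
rewrite z1E z3E !mulrN !mulNr -!expr2 => zz_ge0.
have [] : rcoord z 0 ^+ 2 <= 0 /\ rcoord z 2 ^+ 2 <= 0.
  move: zz_ge0 (sqr_ge0 (rcoord z 0)) (sqr_ge0 (rcoord z 2)).
  by move: (rcoord z 0 ^+ 2) (rcoord z 2 ^+ 2) => a b; split; lra.
rewrite !sqr_le0 => /eqP z0 /eqP z2.
by apply: rcoord_eq0 => -[|[|[|[|//]]]] _; rewrite ?z1E ?z3E ?z0 ?z2 ?oppr0.
Qed.

Lemma bil_perp_posplane (R : rcfType) (p1 p2 v : 'rV[R]_12) :
  pos_plane p1 p2 -> bil p1 v = 0 -> bil p2 v = 0 -> 0 <= bil v v -> v = 0.
Proof.
case=> A_gt0 D_gt0; apply: (bform_perp_posplane (GLam_sym R) _ A_gt0 D_gt0).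
exact: bil_negdef_slice.
Qed.

Lemma K_perp_posplane (R : realFieldType) (x y k : 'rV[R]_4) :
  let U := map_mx intr U2U2 in
  bform U x x = bform U y y -> 0 < bform U x x -> bform U x y = 0 ->
  bform U x k = 0 -> bform U y k = 0 -> 0 <= bform U k k -> k = 0.
Proof.
move=> U xx_yy xx_gt0 xy0.
apply: (bform_perp_posplane (U2U2_sym R) (@U2U2_negdef_slice R) xx_gt0).
by rewrite -xx_yy xy0 expr0n subr0 mulr_gt0.
Qed.

Lemma posplane_orientation_neq0 (R : rcfType) (p1 p2 X Y : 'rV[R]_12) :
  pos_plane p1 p2 -> bil X X = bil Y Y -> 0 < bil X X -> bil X Y = 0 ->
  bil X p1 * bil Y p2 - bil X p2 * bil Y p1 != 0.
Proof.
move=> pp XY_eq X_gt0 XY0; apply/eqP => D0.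
have X_neq0 := gt_eqF X_gt0.
have perp_comb a b : a * bil X p1 + b * bil Y p1 = 0 -> a * bil X p2 + b * bil Y p2 = 0 ->
    a = 0 /\ b = 0.
  move=> e1 e2; set V := a *: X + b *: Y.
  have bilV Z : bil Z V = a * bil Z X + b * bil Z Y.
    by rewrite bilDr !bilZr.
  have V0 : V = 0.
    apply: bil_perp_posplane pp _ _ _; rewrite bilV ?(bilC p1) ?(bilC p2) //.
    rewrite (bilC V X) (bilC V Y) !bilV (bilC Y X) XY0 -XY_eq.
    have -> : a * (a * bil X X + b * 0) + b * (a * 0 + b * bil X X) =
              (a ^+ 2 + b ^+ 2) * bil X X by ring.
    by rewrite mulr_ge0 ?addr_ge0 ?sqr_ge0 ?ltW.
  have := bilV X; have := bilV Y.
  rewrite V0 !bil0r (bilC Y X) XY0 -XY_eq !mulr0 add0r addr0.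
  by move=> /esym/eqP; rewrite mulf_eq0 X_neq0 orbF => /eqP -> /esym/eqP;
     rewrite mulf_eq0 X_neq0 orbF => /eqP ->.
(* Since the determinant vanishes, (y1, -x1) and (y2, -x2) solve the system. *)
have [y1 x1] : bil Y p1 = 0 /\ - bil X p1 = 0 by apply: perp_comb; lra.
have [y2 x2] : bil Y p2 = 0 /\ - bil X p2 = 0 by apply: perp_comb; lra.
have [one0 _] := perp_comb 1 0 ltac:(lra) ltac:(lra).
by have := oner_neq0 R; rewrite one0 eqxx.
Qed.

(** * The half vectors of the patching data *)

Lemma map_mx_intz m n (M : 'M[int]_(m, n)) : map_mx intr M = M.
Proof. by apply/matrixP => i j; rewrite mxE intz. Qed.

Lemma ratvZ n (c : int) (v : 'rV[int]_n) : ratv (c *: v) = c%:~R *: ratv v.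
Proof. by apply/matrixP => i j; rewrite !mxE intrM. Qed.

Lemma ratvD n (u v : 'rV[int]_n) : ratv (u + v) = ratv u + ratv v.
Proof. by apply/matrixP => i j; rewrite !mxE intrD. Qed.

Lemma ratvM m n (u : 'rV[int]_m) (M : 'M[int]_(m, n)) :
  ratv (u *m M) = ratv u *m map_mx intr M.
Proof. exact: map_mxM. Qed.

Lemma ratv_inj n : injective (@ratv n).
Proof.
move=> u v /matrixP uv; apply/matrixP => i j.
by move: (uv i j); rewrite !mxE; apply: intr_inj.
Qed.

Lemma bil_row (F : comNzRingType) m n (M : 'M[int]_(m, 12)) (N : 'M[int]_(n, 12))
    (t : 'rV[F]_m) (i : 'I_n) :
  bil (t *m map_mx intr M) (map_mx intr (row i N))
  = (t *m map_mx intr (M *m GLam *m N^T)) 0 i.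
Proof.
have -> : map_mx intr (row i N) = row i (map_mx intr N : 'M[F]_(n, 12)).
  by apply/rowP => j; rewrite !mxE.
by rewrite bilE /bform tr_row colE !mulmxA -colE mxE !map_mxM map_trmx !mulmxA.
Qed.

Lemma gram_entry m n (M : 'M[int]_(m, 12)) (N : 'M[int]_(n, 12)) i j :
  (M *m GLam *m N^T) i j = bil (row i M) (row j N).
Proof.
rewrite [in RHS]rowE -[in RHS](map_mx_intz M) -[in RHS](map_mx_intz (row j N)).
by rewrite bil_row map_mx_intz -rowE !mxE.
Qed.

Lemma E_basis_perp_gram B C : E_basis_perp B C -> B *m GLam *m C^T = 0.
Proof. by case=> _ BC0 _; apply/matrixP => i j; rewrite gram_entry mxE BC0. Qed.

Definition U2U2_inv2 : 'M[int]_4 :=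
  \matrix_(i < 4, j < 4)
    (let i' := nat_of_ord i in let j' := nat_of_ord j in
     if [|| (i' == 0) && (j' == 1), (i' == 1) && (j' == 0),
        (i' == 2) && (j' == 3) | (i' == 3) && (j' == 2)]%N
     then 1%:Z else 0%:Z).

Lemma U2U2_inv2E : U2U2 *m U2U2_inv2 = 2%:M.
Proof.
apply/matrixP => i j; rewrite !mxE sum_inord !big_nat_recr //= big_nil !mxE !inordK //.
by case: i => -[|[|[|[|//]]]] ?; case: j => -[|[|[|[|//]]]] ?.
Qed.

(* The inverse of the Cartan matrix of E8; [E8_2] is minus twice that Cartan matrix. *)
Definition E8_cartan_inv : seq (seq int) :=
 [:: [:: 4; 5; 7; 10; 8; 6; 4; 2]; [:: 5; 8; 10; 15; 12; 9; 6; 3];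
     [:: 7; 10; 14; 20; 16; 12; 8; 4]; [:: 10; 15; 20; 30; 24; 18; 12; 6];
     [:: 8; 12; 16; 24; 20; 15; 10; 5]; [:: 6; 9; 12; 18; 15; 12; 8; 4];
     [:: 4; 6; 8; 12; 10; 8; 6; 3]; [:: 2; 3; 4; 6; 5; 4; 3; 2]].

Definition E8_2_inv2 : 'M[int]_8 :=
  \matrix_(i < 8, j < 8) - nth 0 (nth [::] E8_cartan_inv i) j.

Lemma E8_2_inv2E : E8_2 *m E8_2_inv2 = 2%:M.
Proof.
apply/matrixP => i j; rewrite !mxE sum_inord !big_nat_recr //= big_nil !mxE !inordK //.
by case: i => -[|[|[|[|[|[|[|[|//]]]]]]]] ?; case: j => -[|[|[|[|[|[|[|[|//]]]]]]]] ?.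
Qed.

Definition odd_entry n (s : 'rV[int]_n) : bool := [exists k, ~~ (2 %| s ord0 k)%Z].

Lemma odd_entry_shift n (s a : 'rV[int]_n) : odd_entry s -> odd_entry (s + 2 *: a).
Proof.
case/existsP=> k s_odd; apply/existsP; exists k; rewrite !mxE.
apply: contra s_odd => sa_even.
by rewrite -[s _ _](addrK (2 * a 0 k)) rpredB // dvdz_mulr.
Qed.

Lemma odd_entry_neq0 n (s : 'rV[int]_n) : odd_entry s -> s != 0.
Proof. by case/existsP=> k; apply: contraNneq => ->; rewrite mxE dvdz0. Qed.

Lemma not_integral_odd_entry n (s : 'rV[int]_n) (t : 'rV[rat]_n) :
  ratv s = 2 *: t -> ~ (forall i, isZ (t 0 i)) -> odd_entry s.
Proof.
move=> sE t_nZ; apply: contraT => /existsPn s_even; exfalso.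
apply: t_nZ => i; have /dvdzP[q sq] := negPn (s_even i).
exists q; have := congr1 (fun u : 'rV[rat]_n => u 0 i) sE; rewrite /= !mxE sq intrM.
by move=> e; apply: (@mulfI _ 2) => //; rewrite -e mulrC.
Qed.

Lemma half_dual n (M : 'M[int]_(n, 12)) (A : 'M[int]_n) (d : 'rV[rat]_12) :
  M *m GLam *m M^T *m A = 2%:M -> in_dual_not_in M d ->
  exists s : 'rV[int]_n, 2 *: d = ratv (s *m M) /\ odd_entry s.
Proof.
move=> MA2 [t [dE dZ t_nZ]].
have [y yE] : exists y : 'rV[int]_n, ratv y = t *m map_mx intr (M *m GLam *m M^T).
  have [yf yfE] := fin_all_exists (fun i => dZ i).
  exists (\row_i yf i); apply/rowP => i.
  by rewrite -bil_row -dE -[map_mx intr (row i M)]/(ratv (row i M)) yfE !mxE.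
have sE : ratv (y *m A) = 2 *: t.
  by rewrite ratvM yE -mulmxA -map_mxM MA2 map_scalar_mx mul_mx_scalar.
exists (y *m A); split; last exact: not_integral_odd_entry sE t_nZ.
by rewrite ratvM dE scalemxAl -sE.
Qed.

Lemma patching_half_vectors B C d1 d2 : patching_data B C d1 d2 ->
  exists (s : 'rV[int]_4) (r : 'rV[int]_8),
    [/\ 2 *: d1 = ratv (s *m B), 2 *: d2 = ratv (r *m C), odd_entry s & odd_entry r].
Proof.
case=> KB [CC _ _] dB dC _.
have [s [sE s_odd]] : exists s : 'rV[int]_4, 2 *: d1 = ratv (s *m B) /\ odd_entry s.
  by apply: (half_dual (A := U2U2_inv2) _ dB); rewrite KB U2U2_inv2E.
have [r [rE r_odd]] : exists r : 'rV[int]_8, 2 *: d2 = ratv (r *m C) /\ odd_entry r.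
  by apply: (half_dual (A := E8_2_inv2) _ dC); rewrite CC E8_2_inv2E.
by exists s, r.
Qed.

Lemma double_glue (B : 'M[int]_(4, 12)) (C : 'M[int]_(8, 12)) (d1 d2 : 'rV[rat]_12)
    (s : 'rV[int]_4) (r : 'rV[int]_8) (n : int) (a : 'rV[int]_4) (b : 'rV[int]_8)
    (v : 'rV[int]_12) :
  2 *: d1 = ratv (s *m B) -> 2 *: d2 = ratv (r *m C) ->
  ratv v = n%:~R *: (d1 + d2) + ratv a *m map_mx intr B + ratv b *m map_mx intr C ->
  2 *: v = (n *: s + 2 *: a) *m B + (n *: r + 2 *: b) *m C.
Proof.
move=> d1E d2E vE; apply: ratv_inj.
rewrite ratvZ vE !ratvD !ratvM !ratvD !ratvZ -[2%:~R]/(2 : rat) !scalerDr.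
rewrite !scalerA (mulrC 2 n%:~R) -!scalerA d1E d2E -!ratvM !mulmxDl -!scalemxAl -!ratvM.
by rewrite -addrA addrACA.
Qed.

Section KEGram.
Variables (F : comNzRingType) (B : 'M[int]_(4, 12)) (C : 'M[int]_(8, 12)).
Hypotheses (KB : K_basis B) (EC : E_basis_perp B C).

Lemma bil_K (x y : 'rV[F]_4) :
  bil (x *m map_mx intr B) (y *m map_mx intr B) = bform (map_mx intr U2U2) x y.
Proof. by rewrite bilE bform_mulmx map_trmx -!map_mxM KB. Qed.

Lemma bil_K_norm (x : 'rV[F]_4) :
  bil (x *m map_mx intr B) (x *m map_mx intr B) = 4 * qU2 (rcoord x).
Proof. by rewrite bil_K bform_U2U2 /bU2 /qU2; ring. Qed.

Lemma bil_K_E (x : 'rV[F]_4) (y : 'rV[F]_8) :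
  bil (x *m map_mx intr B) (y *m map_mx intr C) = 0.
Proof.
rewrite bilE bform_mulmx map_trmx -!map_mxM (E_basis_perp_gram EC) map_mx0.
by rewrite /bform mulmx0 mul0mx mxE.
Qed.

Lemma bil_E (y : 'rV[F]_8) :
  bil (y *m map_mx intr C) (y *m map_mx intr C) = - 4 * qE8 (rcoord y).
Proof. by case: EC => CC _ _; rewrite bilE bform_mulmx map_trmx -!map_mxM CC bform_E8_2. Qed.

Lemma bil_KE (x' x : 'rV[F]_4) (y : 'rV[F]_8) :
  bil (x' *m map_mx intr B) (x *m map_mx intr B + y *m map_mx intr C)
  = 2 * bU2 (rcoord x') (rcoord x).
Proof. by rewrite bilDr bil_K bil_K_E bform_U2U2 addr0. Qed.

Lemma bil_KE_norm (x : 'rV[F]_4) (y : 'rV[F]_8) :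
  bil (x *m map_mx intr B + y *m map_mx intr C) (x *m map_mx intr B + y *m map_mx intr C)
  = 4 * qU2 (rcoord x) - 4 * qE8 (rcoord y).
Proof.
rewrite bilDl bil_KE bilC bilDl bil_K_E bil_E.
by rewrite /bU2 /qU2; ring.
Qed.

End KEGram.

Section Glue.
Variables (B : 'M[int]_(4, 12)) (C : 'M[int]_(8, 12)).
Hypotheses (KB : K_basis B) (EC : E_basis_perp B C).

Lemma half_norm (d : 'rV[rat]_12) (s : 'rV[int]_4) :
  2 *: d = ratv (s *m B) -> bil d d = (qU2 (rcoord s))%:~R.
Proof.
move=> dE; apply: (@mulfI _ 4) => //.
by rewrite -bil_scale2 dE /ratv bil_map -[B]map_mx_intz bil_K_norm // rmorphM.
Qed.

Lemma glue_norm (v : 'rV[int]_12) (x : 'rV[int]_4) (y : 'rV[int]_8) :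
  2 *: v = x *m B + y *m C -> bil v v = qU2 (rcoord x) - qE8 (rcoord y).
Proof.
move=> vE; apply: (@mulfI _ 4) => //.
by rewrite -bil_scale2 vE -[B]map_mx_intz -[C]map_mx_intz bil_KE_norm //; ring.
Qed.

End Glue.

(** * Classes of odd norm modulo 2 *)

Definition bits : seq int := [:: 0; 1].

Fixpoint bit_seqs (n : nat) : seq (seq int) :=
  if n is n'.+1 then [seq a :: l | a <- bits, l <- bit_seqs n'] else [:: [::]].

Definition congr2_seq (n : nat) (r t : seq int) : bool :=
  all (fun k => (2 %| nth 0 r k - nth 0 t k)%Z) (iota 0 n).

Lemma mem_bit_seqs (l : seq int) : all (mem bits) l -> l \in bit_seqs (size l).
Proof.
elim: l => [|a l IHl] // /andP[a_bit l_bits].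
by apply/(@allpairsP _ _ _ (fun a l => a :: l)); exists (a, l); split => //; exact: IHl.
Qed.

Lemma modz2_bit (z : int) : (z %% 2)%Z \in bits.
Proof.
have m_ge0 : 0 <= (z %% 2)%Z by rewrite modz_ge0.
have m_lt2 : (z %% 2)%Z < 2 by rewrite ltz_pmod.
by rewrite !inE; apply/orP; lia.
Qed.

(* As q (t + 2 m) = q t modulo 2, it suffices to check the 0/1 vectors. *)
Lemma odd_class_rep n (q : (nat -> int) -> int) (reps : seq (seq int)) (target : int) :
  (forall x y, (forall k, (k < n.+1)%N -> x k = y k) -> q x = q y) ->
  (forall t m, (2 %| q (fun k => t k + 2 * m k) - q t)%Z) ->
  all (fun t => (2 %| q (nth 0 t))%Z || has (fun r => congr2_seq n.+1 r t) reps)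
      (bit_seqs n.+1) ->
  all (fun r => q (nth 0 r) == target) reps ->
  forall r : 'rV[int]_n.+1, ~~ (2 %| q (rcoord r))%Z ->
  exists b : 'rV[int]_n.+1, q (rcoord (r + 2 *: b)) = target.
Proof.
move=> q_ext q_shift reps_cover reps_target r q_odd.
pose t := mkseq (fun k => (rcoord r k %% 2)%Z) n.+1.
have tE k : (k < n.+1)%N -> rcoord r k = nth 0 t k + 2 * (rcoord r k %/ 2)%Z.
  by move=> k_lt; rewrite nth_mkseq // addrC mulrC -divz_eq.
have t_odd : ~~ (2 %| q (nth 0 t))%Z.
  apply: contra q_odd => t_even; rewrite (q_ext _ _ tE).
  by rewrite -(subrK (q (nth 0 t)) (q _)) rpredD ?q_shift.
have t_bits : t \in bit_seqs n.+1.
  rewrite -[n.+1](size_mkseq (fun k => (rcoord r k %% 2)%Z)) mem_bit_seqs //.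
  by apply/allP => _ /mapP[k _ ->]; exact: modz2_bit.
have /hasP[rl rl_rep /allP rl_t] : has (fun rl => congr2_seq n.+1 rl t) reps.
  by move: (allP reps_cover t t_bits); rewrite (negbTE t_odd).
exists (\row_k ((nth 0 rl k - rcoord r k) %/ 2)%Z).
rewrite -(eqP (allP reps_target rl rl_rep)); apply: q_ext => k k_lt.
have rl_even : (2 %| nth 0 rl k - rcoord r k)%Z.
  have := rl_t k; rewrite mem_iota add0n k_lt => /(_ isT).
  by rewrite (tE k k_lt) opprD addrA => /rpredB; apply; rewrite dvdz_mulr.
by rewrite /rcoord !mxE inordK // -/(rcoord r k) mulrC divzK // addrC subrK.
Qed.

(* The 120 positive roots of E8 in the basis of simple roots; they represent the 120
   classes of odd norm of E8 / 2 E8. *)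
Definition E8_positive_roots : seq (seq int) :=
  [::
   [:: 0; 0; 0; 0; 0; 0; 0; 1]; [:: 0; 0; 0; 0; 0; 0; 1; 0]; [:: 0; 0; 0; 0; 0; 0; 1; 1];
   [:: 0; 0; 0; 0; 0; 1; 0; 0]; [:: 0; 0; 0; 0; 0; 1; 1; 0]; [:: 0; 0; 0; 0; 0; 1; 1; 1];
   [:: 0; 0; 0; 0; 1; 0; 0; 0]; [:: 0; 0; 0; 0; 1; 1; 0; 0]; [:: 0; 0; 0; 0; 1; 1; 1; 0];
   [:: 0; 0; 0; 0; 1; 1; 1; 1]; [:: 0; 0; 0; 1; 0; 0; 0; 0]; [:: 0; 0; 0; 1; 1; 0; 0; 0];
   [:: 0; 0; 0; 1; 1; 1; 0; 0]; [:: 0; 0; 0; 1; 1; 1; 1; 0]; [:: 0; 0; 0; 1; 1; 1; 1; 1];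
   [:: 0; 0; 1; 0; 0; 0; 0; 0]; [:: 0; 0; 1; 1; 0; 0; 0; 0]; [:: 0; 0; 1; 1; 1; 0; 0; 0];
   [:: 0; 0; 1; 1; 1; 1; 0; 0]; [:: 0; 0; 1; 1; 1; 1; 1; 0]; [:: 0; 0; 1; 1; 1; 1; 1; 1];
   [:: 0; 1; 0; 0; 0; 0; 0; 0]; [:: 0; 1; 0; 1; 0; 0; 0; 0]; [:: 0; 1; 0; 1; 1; 0; 0; 0];
   [:: 0; 1; 0; 1; 1; 1; 0; 0]; [:: 0; 1; 0; 1; 1; 1; 1; 0]; [:: 0; 1; 0; 1; 1; 1; 1; 1];
   [:: 0; 1; 1; 1; 0; 0; 0; 0]; [:: 0; 1; 1; 1; 1; 0; 0; 0]; [:: 0; 1; 1; 1; 1; 1; 0; 0];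
   [:: 0; 1; 1; 1; 1; 1; 1; 0]; [:: 0; 1; 1; 1; 1; 1; 1; 1]; [:: 0; 1; 1; 2; 1; 0; 0; 0];
   [:: 0; 1; 1; 2; 1; 1; 0; 0]; [:: 0; 1; 1; 2; 1; 1; 1; 0]; [:: 0; 1; 1; 2; 1; 1; 1; 1];
   [:: 0; 1; 1; 2; 2; 1; 0; 0]; [:: 0; 1; 1; 2; 2; 1; 1; 0]; [:: 0; 1; 1; 2; 2; 1; 1; 1];
   [:: 0; 1; 1; 2; 2; 2; 1; 0]; [:: 0; 1; 1; 2; 2; 2; 1; 1]; [:: 0; 1; 1; 2; 2; 2; 2; 1];
   [:: 1; 0; 0; 0; 0; 0; 0; 0]; [:: 1; 0; 1; 0; 0; 0; 0; 0]; [:: 1; 0; 1; 1; 0; 0; 0; 0];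
   [:: 1; 0; 1; 1; 1; 0; 0; 0]; [:: 1; 0; 1; 1; 1; 1; 0; 0]; [:: 1; 0; 1; 1; 1; 1; 1; 0];
   [:: 1; 0; 1; 1; 1; 1; 1; 1]; [:: 1; 1; 1; 1; 0; 0; 0; 0]; [:: 1; 1; 1; 1; 1; 0; 0; 0];
   [:: 1; 1; 1; 1; 1; 1; 0; 0]; [:: 1; 1; 1; 1; 1; 1; 1; 0]; [:: 1; 1; 1; 1; 1; 1; 1; 1];
   [:: 1; 1; 1; 2; 1; 0; 0; 0]; [:: 1; 1; 1; 2; 1; 1; 0; 0]; [:: 1; 1; 1; 2; 1; 1; 1; 0];
   [:: 1; 1; 1; 2; 1; 1; 1; 1]; [:: 1; 1; 1; 2; 2; 1; 0; 0]; [:: 1; 1; 1; 2; 2; 1; 1; 0];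
   [:: 1; 1; 1; 2; 2; 1; 1; 1]; [:: 1; 1; 1; 2; 2; 2; 1; 0]; [:: 1; 1; 1; 2; 2; 2; 1; 1];
   [:: 1; 1; 1; 2; 2; 2; 2; 1]; [:: 1; 1; 2; 2; 1; 0; 0; 0]; [:: 1; 1; 2; 2; 1; 1; 0; 0];
   [:: 1; 1; 2; 2; 1; 1; 1; 0]; [:: 1; 1; 2; 2; 1; 1; 1; 1]; [:: 1; 1; 2; 2; 2; 1; 0; 0];
   [:: 1; 1; 2; 2; 2; 1; 1; 0]; [:: 1; 1; 2; 2; 2; 1; 1; 1]; [:: 1; 1; 2; 2; 2; 2; 1; 0];
   [:: 1; 1; 2; 2; 2; 2; 1; 1]; [:: 1; 1; 2; 2; 2; 2; 2; 1]; [:: 1; 1; 2; 3; 2; 1; 0; 0];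
   [:: 1; 1; 2; 3; 2; 1; 1; 0]; [:: 1; 1; 2; 3; 2; 1; 1; 1]; [:: 1; 1; 2; 3; 2; 2; 1; 0];
   [:: 1; 1; 2; 3; 2; 2; 1; 1]; [:: 1; 1; 2; 3; 2; 2; 2; 1]; [:: 1; 1; 2; 3; 3; 2; 1; 0];
   [:: 1; 1; 2; 3; 3; 2; 1; 1]; [:: 1; 1; 2; 3; 3; 2; 2; 1]; [:: 1; 1; 2; 3; 3; 3; 2; 1];
   [:: 1; 2; 2; 3; 2; 1; 0; 0]; [:: 1; 2; 2; 3; 2; 1; 1; 0]; [:: 1; 2; 2; 3; 2; 1; 1; 1];
   [:: 1; 2; 2; 3; 2; 2; 1; 0]; [:: 1; 2; 2; 3; 2; 2; 1; 1]; [:: 1; 2; 2; 3; 2; 2; 2; 1];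
   [:: 1; 2; 2; 3; 3; 2; 1; 0]; [:: 1; 2; 2; 3; 3; 2; 1; 1]; [:: 1; 2; 2; 3; 3; 2; 2; 1];
   [:: 1; 2; 2; 3; 3; 3; 2; 1]; [:: 1; 2; 2; 4; 3; 2; 1; 0]; [:: 1; 2; 2; 4; 3; 2; 1; 1];
   [:: 1; 2; 2; 4; 3; 2; 2; 1]; [:: 1; 2; 2; 4; 3; 3; 2; 1]; [:: 1; 2; 2; 4; 4; 3; 2; 1];
   [:: 1; 2; 3; 4; 3; 2; 1; 0]; [:: 1; 2; 3; 4; 3; 2; 1; 1]; [:: 1; 2; 3; 4; 3; 2; 2; 1];
   [:: 1; 2; 3; 4; 3; 3; 2; 1]; [:: 1; 2; 3; 4; 4; 3; 2; 1]; [:: 1; 2; 3; 5; 4; 3; 2; 1];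
   [:: 1; 3; 3; 5; 4; 3; 2; 1]; [:: 2; 2; 3; 4; 3; 2; 1; 0]; [:: 2; 2; 3; 4; 3; 2; 1; 1];
   [:: 2; 2; 3; 4; 3; 2; 2; 1]; [:: 2; 2; 3; 4; 3; 3; 2; 1]; [:: 2; 2; 3; 4; 4; 3; 2; 1];
   [:: 2; 2; 3; 5; 4; 3; 2; 1]; [:: 2; 2; 4; 5; 4; 3; 2; 1]; [:: 2; 3; 3; 5; 4; 3; 2; 1];
   [:: 2; 3; 4; 5; 4; 3; 2; 1]; [:: 2; 3; 4; 6; 4; 3; 2; 1]; [:: 2; 3; 4; 6; 5; 3; 2; 1];
   [:: 2; 3; 4; 6; 5; 4; 2; 1]; [:: 2; 3; 4; 6; 5; 4; 3; 1]; [:: 2; 3; 4; 6; 5; 4; 3; 2]].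

Lemma E8_odd_class_root (r : 'rV[int]_8) : ~~ (2 %| qE8 (rcoord r))%Z ->
  exists b : 'rV[int]_8, qE8 (rcoord (r + 2 *: b)) = 1.
Proof.
move: r; apply: (@odd_class_rep 7 qE8 E8_positive_roots 1); first exact: qE8_ext.
- exact: qE8_shift.
- by vm_compute.
- by vm_compute.
Qed.

(* One vector of norm -1 in each of the six classes of odd norm of (U + U) / 2 (U + U). *)
Definition U2_norm_minus1 : seq (seq int) :=
  [:: [:: 1; -1; 0; 0]; [:: 1; -1; 1; 0]; [:: 1; -1; 0; 1]; [:: 0; 0; 1; -1];
      [:: 1; 0; 1; -1]; [:: 0; 1; 1; -1]].

Lemma U2_odd_class_rep (s : 'rV[int]_4) : ~~ (2 %| qU2 (rcoord s))%Z ->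
  exists a : 'rV[int]_4, qU2 (rcoord (s + 2 *: a)) = -1.
Proof.
move: s; apply: (@odd_class_rep 3 qU2 U2_norm_minus1 (-1)); first exact: qU2_ext.
- exact: qU2_shift.
- by vm_compute.
- by vm_compute.
Qed.

(** * Periods of positive planes *)

Local Open Scope complex_scope.

Lemma intr_complex (R : rcfType) (z : int) : (z%:~R : R[i]) = (z%:~R : R)%:C.
Proof. by rewrite rmorph_int. Qed.

Lemma Re_sum (R : rcfType) (I : Type) (r : seq I) (P : pred I) (f : I -> R[i]) :
  complex.Re (\sum_(i <- r | P i) f i) = \sum_(i <- r | P i) complex.Re (f i).
Proof. by apply: (big_ind2 (fun a b => complex.Re a = b)) => // -[? ?] ? [? ?] ? /= <- <-. Qed.

Lemma Im_sum (R : rcfType) (I : Type) (r : seq I) (P : pred I) (f : I -> R[i]) :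
  complex.Im (\sum_(i <- r | P i) f i) = \sum_(i <- r | P i) complex.Im (f i).
Proof. by apply: (big_ind2 (fun a b => complex.Im a = b)) => // -[? ?] ? [? ?] ? /= <- <-. Qed.

Lemma Re_bil (R : rcfType) (u v : 'rV[R[i]]_12) :
  complex.Re (bil u v) = bil (reV u) (reV v) - bil (imV u) (imV v).
Proof.
rewrite !bilE !bform_coord -sumrB Re_sum; apply: eq_bigr => i _.
rewrite -sumrB Re_sum; apply: eq_bigr => j _.
rewrite /rcoord !mxE intr_complex.
by case: (u 0 (inord i)) => a b; case: (v 0 (inord j)) => c d /=; ring.
Qed.

Lemma Im_bil (R : rcfType) (u v : 'rV[R[i]]_12) :
  complex.Im (bil u v) = bil (reV u) (imV v) + bil (imV u) (reV v).
Proof.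
rewrite !bilE !bform_coord -big_split Im_sum; apply: eq_bigr => i _.
rewrite -big_split Im_sum; apply: eq_bigr => j _.
rewrite /rcoord !mxE intr_complex.
by case: (u 0 (inord i)) => a b; case: (v 0 (inord j)) => c d /=; ring.
Qed.

Lemma reV_conj (R : rcfType) (u : 'rV[R[i]]_12) : reV (conjV u) = reV u.
Proof. by apply/matrixP => i j; rewrite !mxE; case: (u i j). Qed.

Lemma imV_conj (R : rcfType) (u : 'rV[R[i]]_12) : imV (conjV u) = - imV u.
Proof. by apply/matrixP => i j; rewrite !mxE; case: (u i j). Qed.

Lemma reV_intr (R : rcfType) (d : 'rV[int]_12) :
  reV (map_mx intr d : 'rV[R[i]]_12) = map_mx intr d.
Proof. by apply/matrixP => i j; rewrite !mxE intr_complex. Qed.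

Lemma imV_intr (R : rcfType) (d : 'rV[int]_12) : imV (map_mx intr d : 'rV[R[i]]_12) = 0.
Proof. by apply/matrixP => i j; rewrite !mxE intr_complex. Qed.

Lemma reV_mulmx (R : rcfType) n (c : 'rV[R[i]]_n) (M : 'M[int]_(n, 12)) :
  reV (c *m map_mx intr M) = map_mx (@complex.Re R) c *m map_mx intr M.
Proof.
apply/matrixP => i j; rewrite !mxE Re_sum; apply: eq_bigr => k _.
by rewrite !mxE intr_complex; case: (c i k) => a b /=; rewrite mulr0 subr0.
Qed.

Lemma imV_mulmx (R : rcfType) n (c : 'rV[R[i]]_n) (M : 'M[int]_(n, 12)) :
  imV (c *m map_mx intr M) = map_mx (@complex.Im R) c *m map_mx intr M.
Proof.
apply/matrixP => i j; rewrite !mxE Im_sum; apply: eq_bigr => k _.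
by rewrite !mxE intr_complex; case: (c i k) => a b /=; rewrite mulr0 add0r.
Qed.

Definition cplxV {R : rcfType} n (X Y : 'rV[R]_n) : 'rV[R[i]]_n :=
  \row_j (X 0 j +i* Y 0 j).

Lemma reV_cplxV (R : rcfType) (X Y : 'rV[R]_12) : reV (cplxV X Y) = X.
Proof. by apply/matrixP => i j; rewrite !mxE (ord1 i). Qed.

Lemma imV_cplxV (R : rcfType) (X Y : 'rV[R]_12) : imV (cplxV X Y) = Y.
Proof. by apply/matrixP => i j; rewrite !mxE (ord1 i). Qed.

Lemma complex_eq0 (R : rcfType) (z : R[i]) : complex.Re z = 0 -> complex.Im z = 0 -> z = 0.
Proof. by case: z => a b /= -> ->. Qed.

Lemma rV_complexP (R : rcfType) (u v : 'rV[R[i]]_12) :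
  reV u = reV v -> imV u = imV v -> u = v.
Proof.
move=> /matrixP uv_re /matrixP uv_im; apply/matrixP => i j.
move: (uv_re i j) (uv_im i j); rewrite !mxE.
by case: (u i j) => ? ?; case: (v i j) => ? ? /= -> ->.
Qed.

Section PeriodOfPlane.
Variables (R : rcfType) (p1 p2 X Y : 'rV[R]_12).
Hypotheses (XY_eq : bil X X = bil Y Y) (X_gt0 : 0 < bil X X) (XY0 : bil X Y = 0).

Lemma OmegaPlus_cplxV :
  0 < bil X p1 * bil Y p2 - bil X p2 * bil Y p1 -> OmegaPlus p1 p2 (cplxV X Y).
Proof.
move=> orient; split; rewrite ?reV_cplxV ?imV_cplxV //.
  apply: complex_eq0; first by rewrite Re_bil reV_cplxV imV_cplxV XY_eq subrr.
  by rewrite Im_bil reV_cplxV imV_cplxV (bilC Y X) XY0 addr0.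
rewrite ltcE Re_bil Im_bil reV_conj imV_conj !reV_cplxV !imV_cplxV /=.
rewrite !bilNr (bilC Y X) XY0 oppr0 add0r eqxx /= opprK.
by rewrite -XY_eq addr_gt0.
Qed.

Lemma onH_cplxV (d : 'rV[int]_12) :
  bil X (map_mx intr d) = 0 -> bil Y (map_mx intr d) = 0 -> onH d (cplxV X Y).
Proof.
move=> Xd Yd; apply: complex_eq0.
  by rewrite Re_bil reV_cplxV imV_cplxV reV_intr imV_intr Xd bil0r subrr.
by rewrite Im_bil reV_cplxV imV_cplxV reV_intr imV_intr Yd bil0r addr0.
Qed.

End PeriodOfPlane.

Lemma inKC_cplxV (R : rcfType) (B : 'M[int]_(4, 12)) (x y : 'rV[R]_4) :
  inKC B (cplxV (x *m map_mx intr B) (y *m map_mx intr B)).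
Proof.
exists (cplxV x y); apply: rV_complexP.
  rewrite reV_mulmx reV_cplxV; congr (_ *m _).
  by apply/matrixP => i j; rewrite !mxE (ord1 i).
rewrite imV_mulmx imV_cplxV; congr (_ *m _).
by apply/matrixP => i j; rewrite !mxE (ord1 i).
Qed.

Lemma OmegaPlus_plane (R : rcfType) (p1 p2 : 'rV[R]_12) (w : 'rV[R[i]]_12) :
  OmegaPlus p1 p2 w ->
  [/\ bil (reV w) (reV w) = bil (imV w) (imV w), bil (reV w) (imV w) = 0
    & 0 < bil (reV w) (reV w)].
Proof.
case=> ww0 w_pos _; move: (congr1 (@complex.Re R) ww0) (congr1 (@complex.Im R) ww0).
rewrite Re_bil Im_bil (bilC (imV w)) /= => XX_YY XY2.
move: w_pos; rewrite ltcE Re_bil reV_conj imV_conj bilNr opprK => /andP[_ XX_YY_pos].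
by split; lra.
Qed.

Lemma onH_plane (R : rcfType) (d : 'rV[int]_12) (w : 'rV[R[i]]_12) : onH d w ->
  bil (reV w) (map_mx intr d) = 0 /\ bil (imV w) (map_mx intr d) = 0.
Proof.
move=> wd; move: (congr1 (@complex.Re R) wd) (congr1 (@complex.Im R) wd).
rewrite Re_bil Im_bil reV_intr imV_intr !bil0r subr0 add0r.
by move=> -> ->.
Qed.

Lemma inKC_plane (R : rcfType) (B : 'M[int]_(4, 12)) (w : 'rV[R[i]]_12) : inKC B w ->
  exists x y : 'rV[R]_4, reV w = x *m map_mx intr B /\ imV w = y *m map_mx intr B.
Proof.
case=> c ->; exists (map_mx (@complex.Re R) c), (map_mx (@complex.Im R) c).
by rewrite reV_mulmx imV_mulmx.
Qed.

Lemma exists_period_perp_root (R : rcfType) (p1 p2 : 'rV[R]_12) (B : 'M[int]_(4, 12))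
    (x y : 'rV[R]_4) (v : 'rV[int]_12) :
  pos_plane p1 p2 ->
  let X := x *m map_mx intr B in let Y := y *m map_mx intr B in
  bil X X = bil Y Y -> 0 < bil X X -> bil X Y = 0 ->
  bil X (map_mx intr v) = 0 -> bil Y (map_mx intr v) = 0 -> bil v v = - 2 ->
  exists w : 'rV[R[i]]_12, [/\ OmegaPlus p1 p2 w, inKC B w & inHcal w].
Proof.
move=> pp X Y XY_eq X_gt0 XY0 Xv Yv vv.
have period y' : bil X X = bil (y' *m map_mx intr B) (y' *m map_mx intr B) ->
    bil X (y' *m map_mx intr B) = 0 -> bil (y' *m map_mx intr B) (map_mx intr v) = 0 ->
    0 < bil X p1 * bil (y' *m map_mx intr B) p2 - bil X p2 * bil (y' *m map_mx intr B) p1 ->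
    exists w : 'rV[R[i]]_12, [/\ OmegaPlus p1 p2 w, inKC B w & inHcal w].
  move=> XY'_eq XY'0 Y'v orient; exists (cplxV X (y' *m map_mx intr B)).
  split; [exact: OmegaPlus_cplxV | exact: inKC_cplxV | exists v; split => //].
  exact: onH_cplxV.
have := posplane_orientation_neq0 pp XY_eq X_gt0 XY0.
rewrite neq_lt => /orP[orient|orient]; last exact: period XY_eq XY0 Yv orient.
apply: (period (- y)); rewrite mulNmx ?(bilNl, bilNr) ?opprK ?XY0 ?Yv ?oppr0 //.
by rewrite -opprB; lra.
Qed.

(** * The two types *)

Definition U2_frame1 {F : pzRingType} (x : nat -> F) : nat -> F :=
  nth 0 [:: x 0%N; - x 1%N; - x 2%N; x 3%N].

Definition U2_frame2 {F : pzRingType} (x : nat -> F) : nat -> F :=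
  nth 0 [:: x 2%N; - x 3%N; x 0%N; - x 1%N].

Lemma U2_frame_spec (F : comNzRingType) (x : nat -> F) :
  [/\ qU2 (U2_frame1 x) = - qU2 x, qU2 (U2_frame2 x) = - qU2 x,
      bU2 (U2_frame1 x) (U2_frame2 x) = 0, bU2 (U2_frame1 x) x = 0 & bU2 (U2_frame2 x) x = 0].
Proof. by rewrite /qU2 /bU2 /U2_frame1 /U2_frame2 /=; split; ring. Qed.

Lemma odd_type_root (B : 'M[int]_(4, 12)) (C : 'M[int]_(8, 12)) (d1 d2 : 'rV[rat]_12) :
  patching_data B C d1 d2 -> qmod2 (bil d1 d1) 1 ->
  exists (v : 'rV[int]_12) (sigma : 'rV[int]_4) (rho : 'rV[int]_8),
    [/\ 2 *: v = sigma *m B + rho *m C, qU2 (rcoord sigma) = -1 & bil v v = -2].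
Proof.
move=> pd [m d1_odd]; have [KB EC _ _ [_ glue]] := pd.
have [s [r [sE rE _ _]]] := patching_half_vectors pd.
have qs_odd : ~~ (2 %| qU2 (rcoord s))%Z.
  have -> : qU2 (rcoord s) = 2 * m + 1.
    by apply: (@intr_inj rat); rewrite -(half_norm KB sE) d1_odd.
  by apply/dvdzP => -[m2]; lia.
have qr_odd : ~~ (2 %| qE8 (rcoord r))%Z.
  have [v0 v0E] := glue 1 0 0.
  have := glue_norm KB EC (double_glue sE rE v0E).
  rewrite !scale1r !scaler0 !addr0 => v0_norm; apply: contra qs_odd => qr_even.
  by rewrite -(subrK (qE8 (rcoord r)) (qU2 _)) -v0_norm rpredD ?bil_even.
have [a sigma_norm] := U2_odd_class_rep qs_odd.
have [b rho_norm] := E8_odd_class_root qr_odd.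
have [v vE] := glue 1 a b.
have v2E : 2 *: v = (s + 2 *: a) *m B + (r + 2 *: b) *m C.
  by rewrite (double_glue sE rE vE) !scale1r.
exists v, (s + 2 *: a), (r + 2 *: b); split => //.
by rewrite (glue_norm KB EC v2E) sigma_norm rho_norm.
Qed.

Lemma period_perp_root (R : rcfType) (p1 p2 : 'rV[R]_12)
    (B : 'M[int]_(4, 12)) (C : 'M[int]_(8, 12)) (v : 'rV[int]_12)
    (sigma : 'rV[int]_4) (rho : 'rV[int]_8) :
  pos_plane p1 p2 -> K_basis B -> E_basis_perp B C ->
  2 *: v = sigma *m B + rho *m C -> qU2 (rcoord sigma) = -1 -> bil v v = -2 ->
  exists w : 'rV[R[i]]_12, [/\ OmegaPlus p1 p2 w, inKC B w & inHcal w].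
Proof.
move=> pp KB EC v2E sigma_norm vv.
pose x := \row_(j < 4) U2_frame1 (rcoord sigma) j.
pose y := \row_(j < 4) U2_frame2 (rcoord sigma) j.
have [xx yy xy xs ys] := U2_frame_spec (rcoord sigma).
have bil_KK u u' : bil (u *m B) (u' *m B) = 2 * bU2 (rcoord u) (rcoord u').
  by rewrite -[B]map_mx_intz bil_K // bform_U2U2.
have bil_Kv u : 2 * bil (u *m B) v = 2 * bU2 (rcoord u) (rcoord sigma).
  by rewrite -bilZr v2E -[B]map_mx_intz -[C]map_mx_intz bil_KE.
have ex k : (k < 4)%N -> rcoord x k = U2_frame1 (rcoord sigma) k by exact: rcoord_row.
have ey k : (k < 4)%N -> rcoord y k = U2_frame2 (rcoord sigma) k by exact: rcoord_row.
have XX : bil (x *m B) (x *m B) = 4.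
  by rewrite bil_KK bU2_diag (qU2_ext ex) xx sigma_norm.
have YY : bil (y *m B) (y *m B) = 4.
  by rewrite bil_KK bU2_diag (qU2_ext ey) yy sigma_norm.
have XY : bil (x *m B) (y *m B) = 0 by rewrite bil_KK (bU2_ext ex ey) xy mulr0.
have Xv : bil (x *m B) v = 0.
  by apply: (@mulfI _ 2) => //; rewrite bil_Kv (bU2_ext ex (fun _ _ => erefl)) xs !mulr0.
have Yv : bil (y *m B) v = 0.
  by apply: (@mulfI _ 2) => //; rewrite bil_Kv (bU2_ext ey (fun _ _ => erefl)) ys !mulr0.
apply: (exists_period_perp_root (x := map_mx intr x) (y := map_mx intr y) pp _ _ _ _ _ vv);
  by rewrite -!map_mxM !bil_map ?XX ?YY ?XY ?Xv ?Yv ?rmorph0 ?ltr0n.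
Qed.

Lemma odd_type_period (R : rcfType) (p1 p2 : 'rV[R]_12)
    (B : 'M[int]_(4, 12)) (C : 'M[int]_(8, 12)) (d1 d2 : 'rV[rat]_12) :
  pos_plane p1 p2 -> patching_data B C d1 d2 -> qmod2 (bil d1 d1) 1 ->
  exists w : 'rV[R[i]]_12, [/\ OmegaPlus p1 p2 w, inKC B w & inHcal w].
Proof.
move=> pp pd odd; have [KB EC _ _ _] := pd.
have [v [sigma [rho [v2E sigma_norm vv]]]] := odd_type_root pd odd.
exact: period_perp_root pp KB EC v2E sigma_norm vv.
Qed.

Lemma even_type_root_K_part (s : 'rV[int]_4) (r : 'rV[int]_8) (n : int)
    (a : 'rV[int]_4) (b : 'rV[int]_8) :
  odd_entry s -> odd_entry r -> (2 %| qU2 (rcoord s))%Z ->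
  qU2 (rcoord (n *: s + 2 *: a)) - qE8 (rcoord (n *: r + 2 *: b)) = -2 ->
  0 <= qU2 (rcoord (n *: s + 2 *: a)) /\ odd_entry (n *: s + 2 *: a).
Proof.
move=> s_odd r_odd qs_even; set m := (n %/ 2)%Z.
have qU2Z2 (u : 'rV[int]_4) : qU2 (rcoord (2 *: u)) = 4 * qU2 (rcoord u).
  by rewrite /qU2 /rcoord !mxE; ring.
have qE8Z2 (u : 'rV[int]_8) : qE8 (rcoord (2 *: u)) = 4 * qE8 (rcoord u).
  by rewrite /qE8 /rcoord !mxE; ring.
have := modz2_bit n; rewrite !inE => /orP[] /eqP n2.
  have nE : n = 2 * m by rewrite [LHS](divz_eq n 2) n2 addr0 mulrC.
  have shift2 p (u v : 'rV[int]_p) : n *: u + 2 *: v = 2 *: (m *: u + v).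
    by apply/rowP => j; rewrite !mxE nE; ring.
  by rewrite !shift2 qU2Z2 qE8Z2; lia.
have nE : n = 1 + 2 * m by rewrite [LHS](divz_eq n 2) n2 addrC mulrC.
have shift1 p (u v : 'rV[int]_p) : n *: u + 2 *: v = u + 2 *: (m *: u + v).
  by apply/rowP => j; rewrite !mxE nE; ring.
rewrite !shift1; move: (m *: s + a) (m *: r + b) => a' b' norm2.
split; last exact: odd_entry_shift.
have qE8_pos : 0 < qE8 (rcoord (r + 2 *: b')).
  by apply/qE8_gt0/odd_entry_neq0/odd_entry_shift.
have qU2_even : (2 %| qU2 (rcoord (s + 2 *: a')))%Z.
  rewrite (qU2_ext (fun k _ => rcoord_shift s a' k)).
  by rewrite -(subrK (qU2 (rcoord s)) (qU2 _)) rpredD ?qU2_shift.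
move: norm2 qE8_pos qU2_even; move: (qE8 _) (qU2 _) => q8 q4 norm2 q8_pos /dvdzP[c].
lia.
Qed.

Lemma even_type_no_period (R : rcfType) (p1 p2 : 'rV[R]_12)
    (B : 'M[int]_(4, 12)) (C : 'M[int]_(8, 12)) (d1 d2 : 'rV[rat]_12) :
  patching_data B C d1 d2 -> qmod2 (bil d1 d1) 0 ->
  ~ exists w : 'rV[R[i]]_12, [/\ OmegaPlus p1 p2 w, inKC B w & inHcal w].
Proof.
move=> pd [m d1_even] [w [/OmegaPlus_plane[XX_YY XY0 XX_gt0] wK [d [dd /onH_plane[Xd Yd]]]]].
have [KB EC _ _ [glue _]] := pd.
have [s [r [sE rE s_odd r_odd]]] := patching_half_vectors pd.
have qs_even : (2 %| qU2 (rcoord s))%Z.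
  apply/dvdzP; exists m; apply: (@intr_inj rat).
  by rewrite -(half_norm KB sE) d1_even addr0 mulrC.
have [n [a [b dE]]] := glue d.
have d2E := double_glue sE rE dE.
have [sigma_ge0 sigma_odd] := even_type_root_K_part s_odd r_odd qs_even
  (etrans (esym (glue_norm KB EC d2E)) dd).
move: d2E sigma_ge0 sigma_odd; set sigma := n *: s + 2 *: a; set rho := n *: r + 2 *: b.
move=> d2E sigma_ge0 /odd_entry_neq0/eqP; apply.
have [x [y [wx wy]]] := inKC_plane wK; rewrite wx wy in XX_YY XY0 XX_gt0 Xd Yd.
have perp (u : 'rV[R]_4) : bil (u *m map_mx intr B) (map_mx intr d) = 0 ->
    bform (map_mx intr U2U2) u (map_mx intr sigma) = 0.
  move=> ud; have d2R : 2 *: (map_mx intr d : 'rV[R]_12) =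
      map_mx intr sigma *m map_mx intr B + map_mx intr rho *m map_mx intr C.
    by rewrite -!map_mxM -map_mxD -d2E map_mxZ.
  by rewrite bform_U2U2 -(bil_KE KB EC _ _ (map_mx intr rho)) -d2R bilZr ud mulr0.
have sigma0 : map_mx intr sigma = 0 :> 'rV[R]_4.
  rewrite !(bil_K KB) in XX_YY XY0 XX_gt0.
  apply: (K_perp_posplane XX_YY XX_gt0 XY0 (perp _ Xd) (perp _ Yd)).
  rewrite bform_U2U2 bU2_diag !mulr_ge0 //.
  by rewrite /qU2 !rcoord_map -!rmorphM -rmorphD ler0z.
by apply/rowP => j; move/rowP/(_ j): sigma0; rewrite !mxE => /eqP; rewrite intr_eq0 => /eqP.
Qed.

Local Close Scope complex_scope.

Theorem proposition3p13 (R : rcfType) (p1 p2 : 'rV[R]_12)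
    (B : 'M[int]_(4, 12)) (C : 'M[int]_(8, 12)) (d1 d2 : 'rV[rat]_12) :
  pos_plane p1 p2 ->
  patching_data B C d1 d2 ->
  (* (1) odd type: q_K(gamma) = 1 in Z/2 *)
  (qmod2 (bil d1 d1) 1 ->
     exists w : 'rV[R[i]]_12, [/\ OmegaPlus p1 p2 w, inKC B w & inHcal w]) /\
  (* (2) even type: q_K(gamma) = 0 in Z/2 *)
  (qmod2 (bil d1 d1) 0 ->
     ~ exists w : 'rV[R[i]]_12, [/\ OmegaPlus p1 p2 w, inKC B w & inHcal w]).
Proof.
move=> pp pd; split; first exact: odd_type_period pp pd.
exact: even_type_no_period pd.
Qed.
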